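(* Let $\tilde{\mathbb{I}}=\{\langle \mu,\nu\rangle\in[0,1]^2 \mid \mu+\nu\le 1\}$, equipped with the subspace topology inherited from $\mathbb{R}^2$. There is no continuous function $f:\tilde{\mathbb{I}}\to\mathbb{R}$ satisfying both of the following conditions: (1) $f$ is injective, i.e., for all $\alpha,\beta\in\tilde{\mathbb{I}}$ with $\alpha\neq\beta$, $f(\alpha)\neq f(\beta)$; (2) $f$ is increasing with respect to Atanassov's partial order $\subset$, i.e., for all $\alpha,\beta\in\tilde{\mathbb{I}}$ with $\alpha\subset\beta$, $f(\alpha)\le f(\beta)$.
   Context: Elements $\alpha=\langle\mu_\alpha,\nu_\alpha\rangle\in\tilde{\mathbb{I}}$ are called intuitionistic fuzzy values (IFVs). Atanassov's partial order on $\tilde{\mathbb{I}}$ is defined by $\langle\mu_1,\nu_1\rangle\subset\langle\mu_2,\nu_2\rangle$ if and only if $\mu_1\le\mu_2$ and $\nu_1\ge\nu_2$. *)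

From HB Require Import structures.
From mathcomp Require Import all_boot all_order all_algebra.
From mathcomp Require Import all_classical all_reals all_analysis.
Set Implicit Arguments. Unset Strict Implicit. Unset Printing Implicit Defensive.
Import Order.TTheory GRing.Theory Num.Theory.
Local Open Scope classical_set_scope.
Local Open Scope ring_scope.

Definition IFV (R : realType) : set (R * R) :=
  [set a | 0 <= a.1 <= 1 /\ 0 <= a.2 <= 1 /\ a.1 + a.2 <= 1].

Definition atanassov_le (R : realType) (a b : R * R) : Prop :=
  a.1 <= b.1 /\ b.2 <= a.2.

From HB Require Import structures.
From mathcomp Require Import all_boot all_order all_algebra.
From mathcomp Require Import all_classical all_reals all_analysis.
From mathcomp Require Import lra.
Import Order.TTheory GRing.Theory Num.Theory numFieldNormedType.Exports.
Local Open Scope classical_set_scope.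
Local Open Scope ring_scope.

(* The fuzzy values <t, 1 - t>, t in [0, 1], form a path in the IFV triangle
   from its least element <0, 1> to its greatest element <1, 0>. By the
   intermediate value theorem, a continuous increasing f takes each of its
   values already on this path, in particular f <1/4, 1/4>. Since <1/4, 1/4>
   is not on the path, f cannot be injective. *)

Lemma continuous_within_comp {S T U : topologicalType} (A : set S) (B : set T)
    (g : S -> T) (f : T -> U) :
  continuous g -> (forall x, A x -> B (g x)) -> {within B, continuous f} ->
  {within A, continuous (f \o g)}.
Proof.
move=> gc gAB /subspace_continuousP fc; apply/subspace_continuousP => x Ax.
have gAB_cvg : g @ within A (nbhs x) --> within B (nbhs (g x)).
  move=> W BW; have gW : nbhs x (fun y => B (g y) -> W (g y)) := gc x _ BW.
  by apply: filterS gW => y BWy Ay; exact/BWy/gAB.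
exact: cvg_comp gAB_cvg (fc _ (gAB _ Ax)).
Qed.

Section fuzzy_values.
Context {R : realType}.

Definition fuzzy_ifv (t : R) : R * R := (t, 1 - t).

Lemma continuous_fuzzy_ifv : continuous fuzzy_ifv.
Proof.
move=> t; have cvg_onem : (fun x : R => 1 - x) @ t --> 1 - t.
  by apply: cvgB; [exact: cvg_cst | exact: cvg_id].
exact: (cvg_pair (G := nbhs t) cvg_id cvg_onem).
Qed.

Lemma IFV_fuzzy (t : R) : t \in `[0, 1] -> IFV (fuzzy_ifv t).
Proof. by rewrite in_itv /= => /andP[t0 t1]; rewrite /IFV /=; lra. Qed.

Lemma atanassov_le_bottom (a : R * R) : IFV a -> atanassov_le (fuzzy_ifv 0) a.
Proof. by rewrite /IFV /atanassov_le /=; lra. Qed.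

Lemma atanassov_le_top (a : R * R) : IFV a -> atanassov_le a (fuzzy_ifv 1).
Proof. by rewrite /IFV /atanassov_le /=; lra. Qed.

Lemma fuzzy_ifv_attains {f : R * R -> R} {a : R * R} :
  {within @IFV R, continuous f} ->
  (forall a b, a \in @IFV R -> b \in @IFV R -> atanassov_le a b -> f a <= f b) ->
  IFV a -> exists2 t, t \in `[0, 1] & f (fuzzy_ifv t) = f a.
Proof.
move=> fc fmon Ia.
have I0 : (0 : R) \in `[0, 1] by rewrite in_itv /= lexx ler01.
have I1 : (1 : R) \in `[0, 1] by rewrite in_itv /= lexx ler01.
have f0a : f (fuzzy_ifv 0) <= f a.
  by apply: fmon; [exact/mem_set/IFV_fuzzy | exact/mem_set | exact: atanassov_le_bottom].
have fa1 : f a <= f (fuzzy_ifv 1).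
  by apply: fmon; [exact/mem_set | exact/mem_set/IFV_fuzzy | exact: atanassov_le_top].
have fpc : {within `[0, 1], continuous (f \o fuzzy_ifv)}.
  by apply: continuous_within_comp continuous_fuzzy_ifv _ fc => t; exact: IFV_fuzzy.
apply: IVT fpc _ => //.
by rewrite ge_min le_max f0a fa1 orbT.
Qed.

End fuzzy_values.

Theorem theorem3 (R : realType) :
  ~ exists f : R * R -> R,
      {within @IFV R, continuous f} /\
      {in @IFV R &, injective f} /\
      (forall a b, a \in @IFV R -> b \in @IFV R -> atanassov_le a b -> f a <= f b).
Proof.
move=> [f [fc [finj fmon]]].
pose a : R * R := (1 / 4, 1 / 4).
have Ia : IFV a by rewrite /IFV /=; lra.
have [t t01 fta] := fuzzy_ifv_attains fc fmon Ia.
have [t_eq t_eq'] := finj _ _ (mem_set (IFV_fuzzy _ t01)) (mem_set Ia) fta.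
lra.
Qed.
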